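(* Let $G$ and $H$ be Left dead-ends. Then $G\geq H$ if and only if $o(G^\circ+H)\leq\mathscr{P}$.
   Context: Games are finite partizan games; $\cong$ is identity of game trees; $o(G)$ is the misère outcome class (ordered $\mathscr{L}>\mathscr{N}>\mathscr{R}$, $\mathscr{L}>\mathscr{P}>\mathscr{R}$, with $\mathscr{N},\mathscr{P}$ incomparable). A universe is a set of games closed under options, disjunctive sums, conjugates, and forming $\{\mathscr{G}^L\mid\mathscr{G}^R\}$ from nonempty finite subsets of it; $G\geq_\mathcal{U}H$ means $o(G+X)\geq o(H+X)$ for all $X\in\mathcal{U}$. A Left dead-end is a game all of whose subpositions have no Left option. For Left dead-ends, $G\geq H$ means $G\geq_\mathcal{U}H$ for every universe $\mathcal{U}$. For a Left dead-end $G$, the adjoint is $G^\circ=*=\{0\mid0\}$ if $G\cong0$ and $G^\circ=\{(G^R)^\circ\mid 0\}$ otherwise, with $G^R$ ranging over the Right options of $G$. *)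

From Stdlib Require Import List Bool.
Import ListNotations.

(* A game {G^L | G^R}: lists of Left options and Right options.
   Game-tree identity (≅) is syntactic equality of these trees
   (order/multiplicity of options is irrelevant for everything below). *)
Inductive game : Type := Game : list game -> list game -> game.

Definition leftOpts (G : game) : list game := match G with Game l _ => l end.
Definition rightOpts (G : game) : list game := match G with Game _ r => r end.

Definition zero : game := Game [] [].
Definition star : game := Game [zero] [zero].

(* Disjunctive sum G + H = {G^L+H, G+H^L | G^R+H, G+H^R}. *)
Fixpoint add (G H : game) {struct G} : game :=
  match G with
  | Game gl gr =>
    (fix addH (H : game) : game :=
       match H with
       | Game hl hr =>
         Game (map (fun x => add x H) gl ++ map addH hl)
              (map (fun x => add x H) gr ++ map addH hr)
       end) H
  end.

Fixpoint conjg (G : game) : game :=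
  match G with Game l r => Game (map conjg r) (map conjg l) end.

(* Misère play: a player with no move available WINS.
   leftWins G = (Left wins G playing first, Left wins G playing second). *)
Fixpoint leftWins (G : game) : bool * bool :=
  match G with
  | Game l r =>
    (match l with [] => true | _ => existsb (fun x => snd (leftWins x)) l end,
     match r with [] => false | _ => forallb (fun x => fst (leftWins x)) r end)
  end.

(* Misère outcome classes.  (Finite games are determined, so Right wins
   playing first iff Left does not win playing second.) *)
Inductive outcome : Type := oL | oN | oP | oR.

Definition o (G : game) : outcome :=
  match leftWins G with
  | (true, true) => oL
  | (true, false) => oN
  | (false, true) => oP
  | (false, false) => oR
  end.

Definition outcome_le (a b : outcome) : Prop :=
  match a, b with
  | oR, _ => True
  | oN, (oN | oL) => True
  | oP, (oP | oL) => True
  | oL, oL => True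
  | _, _ => False
  end.

Definition universe (U : game -> Prop) : Prop :=
  (forall G x, U G -> In x (leftOpts G) -> U x) /\
  (forall G x, U G -> In x (rightOpts G) -> U x) /\
  (forall G H, U G -> U H -> U (add G H)) /\
  (forall G, U G -> U (conjg G)) /\
  (forall A B : list game, A <> [] -> B <> [] ->
     (forall x, In x A -> U x) -> (forall x, In x B -> U x) -> U (Game A B)).

Definition geU (U : game -> Prop) (G H : game) : Prop :=
  forall X, U X -> outcome_le (o (add H X)) (o (add G X)).

Definition ge (G H : game) : Prop :=
  forall U, universe U -> geU U G H.

Inductive subpos : game -> game -> Prop :=
  | subpos_refl G : subpos G G
  | subpos_left G x S : In x (leftOpts G) -> subpos S x -> subpos S G
  | subpos_right G x S : In x (rightOpts G) -> subpos S x -> subpos S G.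

Definition left_dead_end (G : game) : Prop :=
  forall S, subpos S G -> leftOpts S = [].

Fixpoint adjoint (G : game) : game :=
  match G with
  | Game [] [] => star
  | Game _ r => Game (map adjoint r) [zero]
  end.

(* For left dead-ends, G >= H is decided by a recursive test: either G = H = 0,
   or G <> 0 and every Right option of G passes the test against some Right
   option of H.  The test implies o(G + X) >= o(H + X) for every X: whenever
   Right moves to G^R + X, Left continues as if Right had moved to the matching
   H^R + X.  The adjoint is designed so that Left, moving first in G° + H, can
   only go to (G^R)° + H, where Right's reply to 0 leaves Left without moves
   (so Left wins) and his replies (G^R)° + H^R are the inductive instances;
   hence Left loses G° + H playing first exactly when the test holds.  As the
   test holds for (G, G), Left loses G° + G playing first, and G >= H transfers
   this loss to G° + H. *)

From Stdlib Require Import List Lia Classical Wf_nat Bool.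
Import ListNotations.

Fixpoint size (G : game) : nat :=
  match G with Game l r => S (list_sum (map size l) + list_sum (map size r)) end.

Lemma size_In x l : In x l -> size x <= list_sum (map size l).
Proof.
  induction l as [|y l IHl]; simpl; [tauto|].
  intros [->|Hx]; [lia|]. specialize (IHl Hx); lia.
Qed.

Lemma size_leftOpt G x : In x (leftOpts G) -> size x < size G.
Proof. destruct G as [l r]; simpl; intros Hx; apply size_In in Hx; lia. Qed.

Lemma size_rightOpt G x : In x (rightOpts G) -> size x < size G.
Proof. destruct G as [l r]; simpl; intros Hx; apply size_In in Hx; lia. Qed.

Lemma size_ind (P : game -> Prop) :
  (forall G, (forall x, size x < size G -> P x) -> P G) -> forall G, P G.
Proof.
  intros IH. apply (well_founded_induction (well_founded_ltof game size)), IH.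
Qed.

Lemma size2_ind (P : game -> game -> Prop) :
  (forall A B, (forall A' B', size A' + size B' < size A + size B -> P A' B') ->
     P A B) ->
  forall A B, P A B.
Proof.
  intros IH A B.
  change ((fun p : game * game => P (fst p) (snd p)) (A, B)).
  apply (well_founded_induction
           (well_founded_ltof _ (fun p : game * game => size (fst p) + size (snd p)))).
  intros [a b] IHp. apply IH. intros A' B' Hlt. apply (IHp (A', B')).
  unfold ltof; simpl in *; lia.
Qed.

Lemma leftOpts_add G H :
  leftOpts (add G H) = map (fun x => add x H) (leftOpts G) ++ map (add G) (leftOpts H).
Proof. destruct G, H; reflexivity. Qed.

Lemma rightOpts_add G H :
  rightOpts (add G H) = map (fun x => add x H) (rightOpts G) ++ map (add G) (rightOpts H).
Proof. destruct G, H; reflexivity. Qed.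

Definition leftFirst (G : game) : bool := fst (leftWins G).
Definition leftSecond (G : game) : bool := snd (leftWins G).

Lemma leftFirstP G :
  leftFirst G = true <->
  leftOpts G = [] \/ exists x, In x (leftOpts G) /\ leftSecond x = true.
Proof.
  destruct G as [[|y l] r]; unfold leftFirst, leftSecond;
    cbn [leftWins leftOpts fst]; [tauto|].
  rewrite existsb_exists. split; [now right|]. intros [E|Hx]; [discriminate|exact Hx].
Qed.

Lemma leftSecondP G :
  leftSecond G = true <->
  rightOpts G <> [] /\ forall x, In x (rightOpts G) -> leftFirst x = true.
Proof.
  destruct G as [l [|y r]]; unfold leftFirst, leftSecond;
    cbn [leftWins rightOpts snd].
  - split; [discriminate|]. now intros [Hne _].
  - rewrite forallb_forall. split; [now split|]. now intros [_ Hr].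
Qed.

Lemma leftFirst_add A B :
  leftFirst (add A B) = true <->
  (leftOpts A = [] /\ leftOpts B = []) \/
  (exists a, In a (leftOpts A) /\ leftSecond (add a B) = true) \/
  (exists b, In b (leftOpts B) /\ leftSecond (add A b) = true).
Proof.
  rewrite leftFirstP, leftOpts_add. split.
  - intros [E|[x [Hx Hw]]].
    + apply app_eq_nil in E as [EA EB]. apply map_eq_nil in EA, EB. now left.
    + apply in_app_iff in Hx as [Hx|Hx]; apply in_map_iff in Hx as [y [<- Hy]];
        right; [left|right]; eauto.
  - intros [[EA EB]|[[a [Ha Hw]]|[b [Hb Hw]]]].
    + left. now rewrite EA, EB.
    + right. exists (add a B). split; [|exact Hw].
      apply in_app_iff. left. now apply (in_map (fun x => add x B)).
    + right. exists (add A b). split; [|exact Hw].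
      apply in_app_iff. right. now apply in_map.
Qed.

Lemma leftSecond_add A B :
  leftSecond (add A B) = true <->
  (rightOpts A <> [] \/ rightOpts B <> []) /\
  (forall a, In a (rightOpts A) -> leftFirst (add a B) = true) /\
  (forall b, In b (rightOpts B) -> leftFirst (add A b) = true).
Proof.
  rewrite leftSecondP, rightOpts_add. split.
  - intros [Hne Hr]. split; [|split].
    + destruct (rightOpts A); [|left; discriminate].
      destruct (rightOpts B); [contradiction|right; discriminate].
    + intros a Ha. apply Hr, in_app_iff. left. apply in_map_iff. eauto.
    + intros b Hb. apply Hr, in_app_iff. right. apply in_map_iff. eauto.
  - intros [Hne [HA HB]]. split.
    + intros E. apply app_eq_nil in E as [EA EB]. apply map_eq_nil in EA, EB. tauto.
    + intros x Hx. apply in_app_iff in Hx as [Hx|Hx];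
        apply in_map_iff in Hx as [y [<- Hy]]; auto.
Qed.

Lemma leftWins_addC A B : leftWins (add A B) = leftWins (add B A).
Proof.
  revert A B. apply size2_ind. intros A B IH.
  assert (IHA : forall a, In a (leftOpts A) \/ In a (rightOpts A) ->
            leftFirst (add a B) = leftFirst (add B a) /\
            leftSecond (add a B) = leftSecond (add B a)).
  { intros a Ha. unfold leftFirst, leftSecond. rewrite IH; [auto|].
    destruct Ha as [Ha|Ha]; [apply size_leftOpt in Ha|apply size_rightOpt in Ha]; lia. }
  assert (IHB : forall b, In b (leftOpts B) \/ In b (rightOpts B) ->
            leftFirst (add A b) = leftFirst (add b A) /\
            leftSecond (add A b) = leftSecond (add b A)).
  { intros b Hb. unfold leftFirst, leftSecond. rewrite IH; [auto|].
    destruct Hb as [Hb|Hb]; [apply size_leftOpt in Hb|apply size_rightOpt in Hb]; lia. }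
  rewrite (surjective_pairing (leftWins (add A B))),
          (surjective_pairing (leftWins (add B A))).
  fold (leftFirst (add A B)) (leftFirst (add B A))
       (leftSecond (add A B)) (leftSecond (add B A)).
  f_equal; apply eq_true_iff_eq.
  - rewrite !leftFirst_add.
    split; intros [[EA EB]|[[x [Hx Hw]]|[x [Hx Hw]]]]; try (left; tauto);
      right; [right|left|right|left]; exists x; split; auto.
    + now rewrite <- (proj2 (IHA x (or_introl Hx))).
    + now rewrite <- (proj2 (IHB x (or_introl Hx))).
    + now rewrite (proj2 (IHB x (or_introl Hx))).
    + now rewrite (proj2 (IHA x (or_introl Hx))).
  - rewrite !leftSecond_add.
    split; intros [Hne [HA HB]]; split; try tauto; split.
    + intros b Hb. rewrite <- (proj1 (IHB b (or_intror Hb))). auto.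
    + intros a Ha. rewrite <- (proj1 (IHA a (or_intror Ha))). auto.
    + intros a Ha. rewrite (proj1 (IHA a (or_intror Ha))). auto.
    + intros b Hb. rewrite (proj1 (IHB b (or_intror Hb))). auto.
Qed.

Lemma leftFirst_addC A B : leftFirst (add A B) = leftFirst (add B A).
Proof. unfold leftFirst. now rewrite leftWins_addC. Qed.

Lemma leftFirst_add_nil A B :
  leftOpts A = [] -> leftOpts B = [] -> leftFirst (add A B) = true.
Proof. intros EA EB. apply leftFirst_add. now left. Qed.

Lemma outcome_le_o A B :
  outcome_le (o A) (o B) <->
  (leftFirst A = true -> leftFirst B = true) /\
  (leftSecond A = true -> leftSecond B = true).
Proof.
  unfold o, leftFirst, leftSecond.
  destruct (leftWins A) as [[|] [|]], (leftWins B) as [[|] [|]]; simpl;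
    intuition discriminate.
Qed.

Lemma outcome_le_oP A : outcome_le (o A) oP <-> leftFirst A = false.
Proof.
  unfold o, leftFirst. destruct (leftWins A) as [[|] [|]]; simpl; intuition discriminate.
Qed.

Lemma universe_full : universe (fun _ => True).
Proof. repeat split; auto. Qed.

Lemma left_dead_end_leftOpts G : left_dead_end G -> leftOpts G = [].
Proof. intros HG. apply HG, subpos_refl. Qed.

Lemma left_dead_end_rightOpt G x :
  left_dead_end G -> In x (rightOpts G) -> left_dead_end x.
Proof. intros HG Hx S HS. apply HG. eapply subpos_right; eauto. Qed.

Lemma left_dead_end_zero G : left_dead_end G -> rightOpts G = [] -> G = zero.
Proof.
  intros HG Er. apply left_dead_end_leftOpts in HG.
  destruct G; simpl in *; now subst.
Qed.

Inductive ge_rec : game -> game -> Prop :=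
  | ge_rec_zero : ge_rec zero zero
  | ge_rec_right l r H :
      r <> [] ->
      (forall g, In g r -> exists h, In h (rightOpts H) /\ ge_rec g h) ->
      ge_rec (Game l r) H.

Lemma ge_rec_zero_l H : ge_rec zero H -> H = zero.
Proof. intros C. inversion C; [reflexivity|congruence]. Qed.

Lemma ge_rec_rightOpt G H g :
  ge_rec G H -> In g (rightOpts G) -> exists h, In h (rightOpts H) /\ ge_rec g h.
Proof. intros [|l r H' _ Hr]; simpl; [tauto|apply Hr]. Qed.

Lemma ge_rec_refl G : left_dead_end G -> ge_rec G G.
Proof.
  revert G. apply (size_ind (fun G => left_dead_end G -> ge_rec G G)). intros G IH HG.
  destruct G as [l [|g r]].
  - rewrite (left_dead_end_zero _ HG eq_refl). constructor.
  - constructor; [discriminate|]. intros g' Hg'. exists g'. split; [exact Hg'|].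
    apply IH; [now apply (size_rightOpt (Game l (g :: r)))|].
    now apply (left_dead_end_rightOpt (Game l (g :: r))).
Qed.

Lemma ge_rec_leftWins_add G X H :
  left_dead_end G -> left_dead_end H -> ge_rec G H ->
  (leftFirst (add H X) = true -> leftFirst (add G X) = true) /\
  (leftSecond (add H X) = true -> leftSecond (add G X) = true).
Proof.
  revert G X H. apply (size2_ind (fun G X => forall H, _ -> _ -> _ -> _)).
  intros G X IH H HG HH C.
  pose proof (left_dead_end_leftOpts _ HG) as HGl.
  pose proof (left_dead_end_leftOpts _ HH) as HHl.
  split.
  - rewrite !leftFirst_add, HGl, HHl.
    intros [[_ EX]|[[a [[] _]]|[x [Hx Hw]]]]; [now left|].
    right; right. exists x. split; [exact Hx|].
    refine (proj2 (IH G x _ H HG HH C) Hw). apply size_leftOpt in Hx; lia.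
  - rewrite !leftSecond_add. intros [Hne [HHR HXR]]. split; [|split].
    + destruct (rightOpts X) eqn:EX; [|right; discriminate].
      destruct (rightOpts G) eqn:EG; [|left; discriminate].
      apply left_dead_end_zero in EG; [subst G|exact HG].
      apply ge_rec_zero_l in C. subst H. simpl in Hne. tauto.
    + intros g Hg. destruct (ge_rec_rightOpt _ _ _ C Hg) as [h [Hh Cgh]].
      refine (proj1 (IH g X _ h _ _ Cgh) (HHR h Hh)).
      * apply size_rightOpt in Hg; lia.
      * now apply (left_dead_end_rightOpt G).
      * now apply (left_dead_end_rightOpt H).
    + intros x Hx. refine (proj1 (IH G x _ H HG HH C) (HXR x Hx)).
      apply size_rightOpt in Hx; lia.
Qed.

Lemma ge_rec_ge G H : left_dead_end G -> left_dead_end H -> ge_rec G H -> ge G H.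
Proof.
  intros HG HH C U _ X _. apply outcome_le_o. now apply ge_rec_leftWins_add.
Qed.

Lemma rightOpts_adjoint G : rightOpts (adjoint G) = [zero].
Proof. now destruct G as [[|] [|]]. Qed.

Lemma leftSecond_adjoint_add g H :
  leftOpts H = [] ->
  leftSecond (add (adjoint g) H) = true <->
  forall h, In h (rightOpts H) -> leftFirst (add (adjoint g) h) = true.
Proof.
  intros HHl. rewrite leftSecond_add, rightOpts_adjoint. split; [tauto|].
  intros HHR. split; [left; discriminate|split; [|exact HHR]].
  intros a [<-|[]]. now apply leftFirst_add_nil.
Qed.

Lemma leftFirst_star_add H :
  left_dead_end H -> leftFirst (add star H) = true <-> rightOpts H <> [].
Proof.
  intros HH. pose proof (left_dead_end_leftOpts _ HH) as HHl.
  rewrite leftFirst_add, HHl. split.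
  - intros [[E _]|[[a [[<-|[]] Hw]]|[b [[] _]]]]; [discriminate|].
    apply leftSecond_add in Hw as [[Hn|Hn] _]; [now destruct Hn|exact Hn].
  - intros Hne. right; left. exists zero. split; [now left|].
    apply leftSecond_add. split; [now right|split; [intros a []|]].
    intros h Hh. apply leftFirst_add_nil; [reflexivity|].
    now apply left_dead_end_leftOpts, (left_dead_end_rightOpt H).
Qed.

Lemma leftFirst_adjoint_add G H :
  left_dead_end G -> left_dead_end H ->
  leftFirst (add (adjoint G) H) = false <-> ge_rec G H.
Proof.
  revert G H.
  apply (size_ind (fun G => forall H, left_dead_end G -> left_dead_end H -> _)).
  intros G IH H HG HH.
  pose proof (left_dead_end_leftOpts _ HH) as HHl.
  destruct G as [l [|g r]];
    pose proof (left_dead_end_leftOpts _ HG) as HGl; simpl in HGl; subst l.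
  - change (adjoint zero) with star.
    rewrite <- not_true_iff_false, leftFirst_star_add by exact HH. split.
    + intros Hn. rewrite (left_dead_end_zero H HH); [constructor|].
      now destruct (rightOpts H); [|exfalso; apply Hn].
    + intros C. apply ge_rec_zero_l in C. now subst H.
  - set (GR := g :: r).
    assert (IHR : forall x, In x GR ->
              leftSecond (add (adjoint x) H) = true <->
              ~ exists h, In h (rightOpts H) /\ ge_rec x h).
    { intros x Hx. rewrite leftSecond_adjoint_add by exact HHl. split.
      - intros Hw [h [Hh C]].
        apply IH in C; [now rewrite Hw in C| |
          now apply (left_dead_end_rightOpt (Game [] GR))|
          now apply (left_dead_end_rightOpt H)].
        now apply (size_rightOpt (Game [] GR)).
      - intros Hn h Hh. apply not_false_iff_true. intros E. apply Hn.
        exists h. split; [exact Hh|]. apply IH; [| |now apply (left_dead_end_rightOpt H)|exact E].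
        + now apply (size_rightOpt (Game [] GR)).
        + now apply (left_dead_end_rightOpt (Game [] GR)). }
    change (adjoint (Game [] GR)) with (Game (map adjoint GR) [zero]).
    rewrite <- not_true_iff_false, leftFirst_add, HHl.
    change (leftOpts (Game (map adjoint GR) [zero])) with (map adjoint GR). split.
    + intros Hn. constructor; [discriminate|]. intros x Hx.
      apply NNPP. intros Hne. apply Hn. right; left. exists (adjoint x).
      split; [now apply in_map|]. now apply IHR.
    + intros C [[E _]|[[a [Ha Hw]]|[b [[] _]]]]; [discriminate|].
      apply in_map_iff in Ha as [x [<- Hx]].
      apply (IHR x Hx) in Hw. apply Hw. now apply (ge_rec_rightOpt _ _ _ C).
Qed.

Theorem mainTheorem16 (G H : game) :
  left_dead_end G -> left_dead_end H ->
  (ge G H <-> outcome_le (o (add (adjoint G) H)) oP).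
Proof.
  intros HG HH. rewrite outcome_le_oP. split.
  - intros Hge.
    assert (Hself : leftFirst (add (adjoint G) G) = false)
      by now apply leftFirst_adjoint_add, ge_rec_refl.
    pose proof (Hge _ universe_full (adjoint G) I) as Hcmp.
    apply outcome_le_o in Hcmp as [Hfirst _].
    rewrite leftFirst_addC in Hself |- *.
    apply not_true_iff_false. intros T. now rewrite (Hfirst T) in Hself.
  - intros E. apply ge_rec_ge; [exact HG|exact HH|].
    now apply leftFirst_adjoint_add.
Qed.
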